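(* Let $\mathbf L=\{L_1,\dots,L_n\}$ be a finite multiset of positive rationals and $k\in\mathbb N_{>0}$, and suppose $L_{co}\neq l^\star$. Then $(I_{co},\,i\mapsto 1,\,i\mapsto k)$ is an admissible restriction. Moreover $|\mathcal C(I_{co},1,k)|=k\cdot|I_{co}|\le k\cdot\min(k-1,n)$, with equality when the $L_i$ are pairwise distinct; in particular the worst-case size is $\Theta(k\cdot\min(k,n))$.
   Context: For $l\in\mathbb Q_{>0}$: $m(l)=\sum_{i=1}^n\lfloor L_i/l\rfloor$, $c(l)=\sum_i(\lceil L_i/l\rceil-1)$; $l$ is feasible if $m(l)\ge k$; $l^\star$ is the unique optimal cut length (feasible length minimizing $c$ among feasible lengths; equals the largest feasible length). $L^{(k)}$ denotes the $k$-th largest element of $\mathbf L$ counted with multiplicity. The cut-off length is $L_{co}=L^{(k)}$ if $k\le n$ and $L_{co}=0$ if $k>n$; $I_{co}=\{i\in[1..n]: L_i>L_{co}\}$. Candidate multiset: $\mathcal C(I,f_l,f_u)=\biguplus_{i\in I}\{L_i/j: j\in\mathbb N,\ f_l(i)\le j\le f_u(i)\}$ (one occurrence per pair $(i,j)$). A triple $(I,f_l,f_u)$ with $I\subseteq[1..n]$, $f_l,f_u:I\to\mathbb N_{>0}$ is an admissible restriction if (i) for all $i\in I$, $f_l(i)=1$ or $L_i/(f_l(i)-1)$ is infeasible; (ii) for all $i\in I$, $L_i/f_u(i)$ is feasible; (iii) for all $i'\notin I$, $L_{i'}$ is feasible and $L_{i'}\ne l^\star$. *)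

From HB Require Import structures.
From mathcomp Require Import all_boot all_order all_algebra.
Unset Printing Implicit Defensive.
Import Order.TTheory GRing.Theory Num.Theory.
Local Open Scope ring_scope.

(* The multiset L = {L_1,...,L_n} is a list L : seq rat with n = size L;
   L_i is nth 0 L i for i : 'I_(size L). *)
Definition Li (L : seq rat) (i : 'I_(size L)) : rat := nth 0 L i.

Definition mcnt (L : seq rat) (l : rat) : int :=
  \sum_(x <- L) Num.floor (x / l).

Definition ccost (L : seq rat) (l : rat) : int :=
  \sum_(x <- L) (Num.ceil (x / l) - 1).

Definition feasible (L : seq rat) (k : nat) (l : rat) : bool :=
  (0 < l) && (k%:Z <= mcnt L l).

(* l is an optimal cut length: feasible and minimizing c among feasible lengths
   (the paper asserts this l^* is unique). *)
Definition optimal (L : seq rat) (k : nat) (l : rat) : Prop :=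
  feasible L k l /\ forall l', feasible L k l' -> ccost L l <= ccost L l'.

Definition kth_largest (L : seq rat) (k : nat) : rat :=
  nth 0 (sort (fun x y : rat => y <= x) L) k.-1.

Definition Lco (L : seq rat) (k : nat) : rat :=
  if (k <= size L)%N then kth_largest L k else 0.

Definition Ico (L : seq rat) (k : nat) : {set 'I_(size L)} :=
  [set i | Lco L k < Li L i].

(* Candidate multiset C(I, f_l, f_u), as a list with one entry per pair (i, j),
   i in I, f_l(i) <= j <= f_u(i). *)
Definition cands (L : seq rat) (I : {set 'I_(size L)})
    (fl fu : 'I_(size L) -> nat) : seq rat :=
  [seq Li L i / j%:R | i <- enum I, j <- iota (fl i) ((fu i).+1 - fl i)].

Definition admissible (L : seq rat) (k : nat) (lstar : rat)
    (I : {set 'I_(size L)}) (fl fu : 'I_(size L) -> nat) : Prop :=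
  (forall i, i \in I -> (0 < fl i)%N /\ (0 < fu i)%N) /\
  (forall i, i \in I -> fl i = 1%N \/ ~~ feasible L k (Li L i / (fl i - 1)%N%:R)) /\
  (forall i, i \in I -> feasible L k (Li L i / (fu i)%:R)) /\
  (forall i', i' \notin I -> feasible L k (Li L i') /\ Li L i' != lstar).

From HB Require Import structures.
From mathcomp Require Import all_boot all_order all_algebra.
Set Implicit Arguments.
Unset Strict Implicit.
Import Order.TTheory GRing.Theory Num.Theory.
Local Open Scope ring_scope.

(* Every length [l <= L_co] is feasible, since at least [k] of the [L_i] are
   [>= L_co] and each yields a piece; [L_i / k] is feasible since [L_i] alone
   yields [k] pieces.  The cost [c] drops strictly when the cut length grows
   past a member of [L], so [l^*] is at least every feasible [L_i], in
   particular at least [L_co]; as [L_co <> l^*], no [L_i <= L_co] equals [l^*].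
   The size bounds count the [L_i] strictly above the [k]-th largest one. *)

Local Notation ger := (fun x y : rat => y <= x).

Lemma ger_trans : transitive ger.
Proof. exact: rev_trans le_trans. Qed.

Lemma ger_refl : reflexive ger.
Proof. exact: lexx. Qed.

Lemma ger_total : total ger.
Proof. by move=> x y; rewrite le_total. Qed.

Section PieceCountAndCost.
Variable L : seq rat.
Hypothesis L_gt0 : all (fun x : rat => 0 < x) L.

Lemma floor_div_ge0 (x l : rat) : 0 < l -> x \in L -> 0 <= Num.floor (x / l).
Proof. by move=> l_gt0 /(allP L_gt0) x_gt0; rewrite floor_ge0 divr_ge0 ?ltW. Qed.

Lemma count_le_mcnt (l : rat) :
  0 < l -> (count (fun x => l <= x) L)%:Z <= mcnt L l.
Proof.
move=> l_gt0; rewrite /mcnt; elim: L L_gt0 => [|x L' IH] /=; first by rewrite big_nil.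
case/andP=> x_gt0 /IH {}IH; rewrite big_cons PoszD lerD //.
case: (boolP (l <= x)) => lx /=; last by rewrite floor_ge0 divr_ge0 ?ltW.
by rewrite floor_ge_int ler_pdivlMr // mul1r.
Qed.

Lemma floor_le_mcnt (l x : rat) :
  0 < l -> x \in L -> Num.floor (x / l) <= mcnt L l.
Proof.
move=> l_gt0 xL; rewrite /mcnt (big_rem x xL) /= lerDl.
by rewrite big_seq; apply: sumr_ge0 => y /mem_rem; apply: floor_div_ge0.
Qed.

Lemma ccost_lt_mem (l1 l2 : rat) :
  0 < l1 -> l1 < l2 -> l2 \in L -> ccost L l2 < ccost L l1.
Proof.
move=> l1_gt0 l12 l2L; rewrite /ccost (big_rem l2 l2L) [X in _ < X](big_rem l2 l2L) /=.
apply: ltr_leD.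
  rewrite ltrD2r divff ?gt_eqF ?(lt_trans l1_gt0 l12) // ceil1.
  by rewrite ceil_gt_int ltr_pdivlMr // mul1r.
rewrite big_seq_cond [X in _ <= X]big_seq_cond.
apply: ler_sum => x /andP[/mem_rem/(allP L_gt0) x_gt0 _]; rewrite lerB // le_ceil //.
by rewrite ler_pM2l // lef_pV2 ?posrE ?(ltW l12) // (lt_trans l1_gt0).
Qed.

Variable k : nat.

Lemma feasible_count (l : rat) :
  0 < l -> (k <= count (fun x => (l <= x)%R) L)%N -> feasible L k l.
Proof.
move=> l_gt0 kc; rewrite /feasible l_gt0 /=.
by apply: le_trans (count_le_mcnt l_gt0); rewrite lez_nat.
Qed.

Lemma feasible_div_mem (x : rat) : (0 < k)%N -> x \in L -> feasible L k (x / k%:R).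
Proof.
move=> k_gt0 xL; have x_gt0 : 0 < x := allP L_gt0 x xL.
have xk_gt0 : 0 < x / k%:R by rewrite divr_gt0 ?ltr0n.
rewrite /feasible xk_gt0 /=; apply: le_trans (floor_le_mcnt xk_gt0 xL).
by rewrite divKf ?gt_eqF // floor_ge_int.
Qed.

Lemma optimal_ge_mem (lstar x : rat) :
  optimal L k lstar -> x \in L -> feasible L k x -> x <= lstar.
Proof.
move=> [/andP[lstar_gt0 _] lstar_min] xL x_feas; rewrite leNgt; apply/negP => lt_x.
by have := lstar_min _ x_feas; rewrite leNgt (ccost_lt_mem lstar_gt0 lt_x xL).
Qed.

End PieceCountAndCost.

Section SortedDescending.
Variables (s : seq rat) (j : nat).
Hypotheses (s_sorted : sorted ger s) (j_lt : (j < size s)%N).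
Let c := nth 0 s j.

Lemma nth_le_sorted i : (i < size s)%N -> (j <= i)%N -> nth 0 s i <= c.
Proof. exact: (sorted_leq_nth ger_trans ger_refl 0 s_sorted) j i j_lt. Qed.

Lemma nth_ge_sorted i : (i <= j)%N -> c <= nth 0 s i.
Proof.
move=> ij.
exact: (sorted_leq_nth ger_trans ger_refl 0 s_sorted) i j (leq_ltn_trans ij j_lt) j_lt ij.
Qed.

Lemma count_ge_sorted : (j < count (fun x => (c <= x)%R) s)%N.
Proof.
rewrite -(cat_take_drop j.+1 s) count_cat.
have /eqP -> : count (fun x => c <= x) (take j.+1 s) == size (take j.+1 s).
  rewrite -all_count; apply/(all_nthP 0) => i; rewrite size_takel // => i_lt.
  by rewrite nth_take // nth_ge_sorted.
by rewrite size_takel // leq_addr.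
Qed.

Lemma count_gt_sorted : (count (fun x => (c < x)%R) s <= j)%N.
Proof.
rewrite -(cat_take_drop j s) count_cat.
have /eqP -> : count (fun x => c < x) (drop j s) == 0%N.
  rewrite -leqn0 leqNgt -has_count -all_predC.
  apply/(all_nthP 0) => i; rewrite size_drop ltn_subRL => i_lt /=.
  by rewrite nth_drop -leNgt; apply: nth_le_sorted; rewrite ?leq_addr.
by rewrite addn0 (leq_trans (count_size _ _)) // size_takel // ltnW.
Qed.

Lemma count_gt_sorted_uniq : uniq s -> (j <= count (fun x => (c < x)%R) s)%N.
Proof.
move=> s_uniq; rewrite -(cat_take_drop j s) count_cat.
have /eqP -> : count (fun x => c < x) (take j s) == size (take j s).
  rewrite -all_count; apply/(all_nthP 0) => i; rewrite size_takel ?(ltnW j_lt) // => i_lt.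
  rewrite nth_take // lt_neqAle nth_ge_sorted ?(ltnW i_lt) // andbT.
  by rewrite nth_uniq ?(ltn_trans i_lt) // neq_ltn i_lt orbT.
by rewrite size_takel ?(ltnW j_lt) // leq_addr.
Qed.

End SortedDescending.

Section KthLargest.
Variables (L : seq rat) (k : nat).
Hypotheses (k_gt0 : (0 < k)%N) (k_le : (k <= size L)%N).

Let s := sort ger L.
Let s_perm : perm_eq s L := permEl (perm_sort ger L).
Let s_sorted : sorted ger s := sort_sorted ger_total L.
Let j_lt : (k.-1 < size s)%N.
Proof. by rewrite size_sort prednK. Qed.

Lemma kth_largest_mem : kth_largest L k \in L.
Proof. by rewrite -(perm_mem s_perm) mem_nth. Qed.

Lemma count_ge_kth_largest : (k <= count (fun x => (kth_largest L k <= x)%R) L)%N.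
Proof. by rewrite -(permP s_perm) -{1}(prednK k_gt0) count_ge_sorted. Qed.

Lemma count_gt_kth_largest : (count (fun x => (kth_largest L k < x)%R) L <= k.-1)%N.
Proof. by rewrite -(permP s_perm) count_gt_sorted. Qed.

Lemma count_gt_kth_largest_uniq :
  uniq L -> count (fun x => kth_largest L k < x) L = k.-1.
Proof.
move=> L_uniq; apply/eqP; rewrite eqn_leq count_gt_kth_largest -(permP s_perm).
by rewrite count_gt_sorted_uniq ?sort_uniq.
Qed.

End KthLargest.

Section CutOff.
Variables (L : seq rat) (k : nat).
Hypotheses (L_gt0 : all (fun x : rat => 0 < x) L) (k_gt0 : (0 < k)%N).

Lemma Li_gt0 (i : 'I_(size L)) : 0 < Li L i.
Proof. exact/(allP L_gt0)/mem_nth. Qed.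

Lemma card_Ico : #|Ico L k| = count (fun x => Lco L k < x) L.
Proof.
rewrite /Ico /Li; move: (Lco L k) => c.
rewrite -[in RHS](take_size L) -(map_nth_iota0 0) // -val_enum_ord -map_comp count_map.
by rewrite cardE size_filter enumT; apply: eq_count => i; rewrite !inE.
Qed.

Lemma Ico_full : (size L < k)%N -> Ico L k = setT.
Proof.
by move=> lt_k; apply/setP => i; rewrite !inE /Lco leqNgt lt_k Li_gt0.
Qed.

Lemma feasible_le_Lco (l : rat) :
  (k <= size L)%N -> 0 < l -> l <= Lco L k -> feasible L k l.
Proof.
move=> k_le l_gt0 le_l; apply: feasible_count => //.
apply: leq_trans (count_ge_kth_largest k_gt0 k_le) (sub_count _ _) => x /=.
by rewrite /Lco k_le in le_l; apply: le_trans.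
Qed.

Lemma admissible_Ico (lstar : rat) :
  optimal L k lstar -> Lco L k != lstar ->
  admissible L k lstar (Ico L k) (fun _ => 1%N) (fun _ => k).
Proof.
move=> lstar_opt Lco_neq; split; first by move=> i _.
split; first by move=> i _; left.
split; first by move=> i _; apply: feasible_div_mem k_gt0 (mem_nth 0 (ltn_ord i)).
move=> i; rewrite inE -leNgt => Li_le.
have k_le : (k <= size L)%N.
  rewrite leqNgt; apply/negP => /Ico_full/setP/(_ i).
  by rewrite !inE ltNge Li_le.
have Lco_mem : Lco L k \in L by rewrite /Lco k_le kth_largest_mem.
have Lco_le : Lco L k <= lstar.
  apply: (optimal_ge_mem L_gt0 lstar_opt Lco_mem).
  exact: feasible_le_Lco k_le (allP L_gt0 _ Lco_mem) (lexx _).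
split; first exact: feasible_le_Lco k_le (Li_gt0 i) Li_le.
by rewrite lt_eqF // (le_lt_trans Li_le) // lt_neqAle Lco_neq.
Qed.

Lemma card_Ico_le : (#|Ico L k| <= minn k.-1 (size L))%N.
Proof.
rewrite leq_min card_Ico count_size andbT.
case: (leqP k (size L)) => [k_le | lt_k]; last first.
  by rewrite (leq_trans (count_size _ _)) // -ltnS prednK.
by rewrite /Lco k_le count_gt_kth_largest.
Qed.

Lemma card_Ico_uniq : uniq L -> #|Ico L k| = minn k.-1 (size L).
Proof.
move=> L_uniq; case: (leqP k (size L)) => [k_le | lt_k].
  rewrite card_Ico /Lco k_le count_gt_kth_largest_uniq //.
  by apply/esym/minn_idPl; rewrite (leq_trans (leq_pred k)).
rewrite Ico_full // cardsT card_ord.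
by apply/esym/minn_idPr; rewrite -ltnS prednK.
Qed.

End CutOff.

Lemma size_cands_const (L : seq rat) (I : {set 'I_(size L)}) (a b : nat) :
  size (cands L I (fun _ => a) (fun _ => b)) = ((b.+1 - a) * #|I|)%N.
Proof.
rewrite /cands size_allpairs_dep cardE mulnC.
by elim: (enum I) => //= i e ->; rewrite size_iota mulSn.
Qed.

Theorem mainTheorem6 (L : seq rat) (k : nat) (lstar : rat) :
  all (fun x : rat => 0 < x) L ->
  (0 < k)%N ->
  optimal L k lstar ->
  Lco L k != lstar ->
  admissible L k lstar (Ico L k) (fun _ => 1%N) (fun _ => k)
  /\ size (cands L (Ico L k) (fun _ => 1%N) (fun _ => k)) = (k * #|Ico L k|)%N
  /\ (k * #|Ico L k| <= k * minn k.-1 (size L))%N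
  /\ (uniq L -> (k * #|Ico L k|)%N = (k * minn k.-1 (size L))%N).
Proof.
move=> L_gt0 k_gt0 lstar_opt Lco_neq.
split; first exact: admissible_Ico.
split; first by rewrite size_cands_const subn1.
split; first by rewrite leq_mul2l card_Ico_le ?orbT.
by move=> L_uniq; rewrite card_Ico_uniq.
Qed.
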